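(* Let $q$ be a prime power, $2\le n\le m$, and $0\ne\mathcal{C}\subseteq\mathrm{Mat}$ a rank-metric code. Then $d(\mathcal{C})=n+1-\min\{d\mid \rho_{\mathrm c}(\mathcal{C},J)=\dim(\mathcal{C})/m \text{ for all subspaces } J\subseteq\mathbb{F}_q^n\text{ with }\dim(J)=d\}=m+1-\min\{d\mid\rho_{\mathrm r}(\mathcal{C},K)=\dim(\mathcal{C})/n\text{ for all subspaces }K\subseteq\mathbb{F}_q^m\text{ with }\dim(K)=d\}$.
   Context: $\mathrm{Mat}$ is the $\mathbb{F}_q$-space of $n\times m$ matrices over $\mathbb{F}_q$; a rank-metric code is an $\mathbb{F}_q$-linear subspace, with minimum distance $d(\mathcal{C})=\min\{\mathrm{rk}(M)\mid M\in\mathcal{C},M\ne0\}$. For subspaces $J\subseteq\mathbb{F}_q^n$, $K\subseteq\mathbb{F}_q^m$: $\mathcal{C}(J,\mathrm c)=\{M\in\mathcal{C}\mid\mathrm{colsp}(M)\subseteq J\}$, $\mathcal{C}(K,\mathrm r)=\{M\in\mathcal{C}\mid\mathrm{rowsp}(M)\subseteq K\}$, $\rho_{\mathrm c}(\mathcal{C},J)=(\dim\mathcal{C}-\dim\mathcal{C}(J^\perp,\mathrm c))/m$, $\rho_{\mathrm r}(\mathcal{C},K)=(\dim\mathcal{C}-\dim\mathcal{C}(K^\perp,\mathrm r))/n$, with $\perp$ the orthogonal complement for the standard inner product. *)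

From HB Require Import structures.
From mathcomp Require Import all_boot all_order all_algebra all_field.
Set Implicit Arguments. Unset Strict Implicit. Unset Printing Implicit Defensive.
Import GRing.Theory.
Local Open Scope ring_scope.

(* F plays the role of F_q (any finite field; q = #|F|).
   Subspaces J of F^n are represented by matrices J : 'M[F]_n through their
   row space (mxalgebra); dim J = \rank J.  For M : 'M_(n,m),
   colsp(M) <= J  <->  (M^T <= J)%MS,  rowsp(M) <= K  <->  (M <= K)%MS. *)

Section Defs.
Variables (F : finFieldType) (n m : nat).

Definition perpmx (k : nat) (J : 'M[F]_k) : 'M[F]_k := kermx J^T.

(* minimum rank of a nonzero element of C (default n, irrelevant for C != 0) *)
Definition min_dist (C : {vspace 'M[F]_(n, m)}) : nat :=
  \big[minn/n]_(M : 'M[F]_(n, m) | (M \in C) && (M != 0)) \rank M.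

(* C(J, c) and C(K, r), as the spans of the (already linear) sets *)
Definition subcode_c (C : {vspace 'M[F]_(n, m)}) (J : 'M[F]_n)
  : {vspace 'M[F]_(n, m)} :=
  <<[seq M <- enum 'M[F]_(n, m) | (M \in C) && (M^T <= J)%MS]>>%VS.

Definition subcode_r (C : {vspace 'M[F]_(n, m)}) (K : 'M[F]_m)
  : {vspace 'M[F]_(n, m)} :=
  <<[seq M <- enum 'M[F]_(n, m) | (M \in C) && (M <= K)%MS]>>%VS.

Definition rho_c (C : {vspace 'M[F]_(n, m)}) (J : 'M[F]_n) : rat :=
  ((\dim C)%:R - (\dim (subcode_c C (perpmx J)))%:R) / m%:R.

Definition rho_r (C : {vspace 'M[F]_(n, m)}) (K : 'M[F]_m) : rat :=
  ((\dim C)%:R - (\dim (subcode_r C (perpmx K)))%:R) / n%:R.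

(* min { d | rho_c(C,J) = dim C / m for all J with dim J = d }.
   d = n always qualifies and no subspace has dimension > n, so the min over
   d <= n is the min over all d. *)
Definition dmin_c (C : {vspace 'M[F]_(n, m)}) : nat :=
  \big[minn/n]_(d < n.+1 |
     [forall J : 'M[F]_n, (\rank J == d) ==>
        (rho_c C J == (\dim C)%:R / m%:R)]) (d : nat).

Definition dmin_r (C : {vspace 'M[F]_(n, m)}) : nat :=
  \big[minn/m]_(d < m.+1 |
     [forall K : 'M[F]_m, (\rank K == d) ==>
        (rho_r C K == (\dim C)%:R / n%:R)]) (d : nat).

End Defs.

(** A nonzero codeword has rank at most [r] iff its column (resp. row)
    space lies in [J^perp] for some [J] of dimension [k - r], since any
    subspace of dimension [<= r] is orthogonal to such a [J].  Hence
    [rho_c(C, J) = dim C / m], i.e. [C(J^perp, c) = 0], holds for every [J]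
    of dimension [d] iff [n - d < d(C)], and the least such [d] is
    [n + 1 - d(C)]. *)

From HB Require Import structures.
From mathcomp Require Import all_boot all_order all_algebra all_field.
From mathcomp Require Import zify.
Local Open Scope ring_scope.
Import GRing.Theory Num.Theory.
Set Implicit Arguments. Unset Strict Implicit.

Lemma geq_bigmin_cond (I : finType) (P : pred I) (G : I -> nat) x i :
  P i -> (\big[minn/x]_(j | P j) G j <= G i)%N.
Proof.
rewrite unlock; have : i \in index_enum I by rewrite mem_index_enum.
elim: (index_enum I) => // a r IH; rewrite inE /=.
case/orP=> [/eqP<- -> | /IH le /le]; first exact: geq_minl.
by case: (P a) => //; apply: leq_trans; apply: geq_minr.
Qed.

Lemma leq_bigmin (I : finType) (P : pred I) (G : I -> nat) x t :
  (t <= x)%N -> (forall i, P i -> t <= G i)%N ->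
  (t <= \big[minn/x]_(i | P i) G i)%N.
Proof.
move=> tx tG; apply: (big_ind (fun v => t <= v)%N) => // a b ta tb.
by rewrite leq_min ta tb.
Qed.

Lemma bigmin_ord_threshold k t (Q : pred 'I_k.+1) :
  (t <= k)%N -> (forall d : 'I_k.+1, Q d = (t <= d)%N) ->
  \big[minn/k]_(d < k.+1 | Q d) (d : nat) = t.
Proof.
move=> tk Qt; apply/eqP; rewrite eqn_leq leq_bigmin ?andbT //; last first.
  by move=> d; rewrite Qt.
by apply: (@geq_bigmin_cond _ _ _ _ (Ordinal (tk : t < k.+1)%N)); rewrite Qt.
Qed.

Section Orthogonality.
Variable F : fieldType.

Lemma sub_kermx_trC p q k (U : 'M[F]_(p, k)) (V : 'M[F]_(q, k)) :
  (U <= kermx V^T)%MS = (V <= kermx U^T)%MS.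
Proof. by rewrite !sub_kermx -trmx_eq0 trmx_mul trmxK. Qed.

Lemma exists_submx_rank p k (B : 'M[F]_(p, k)) d :
  (d <= \rank B)%N -> exists J : 'M[F]_k, \rank J = d /\ (J <= B)%MS.
Proof.
move=> dB; exists ((pid_mx d : 'M_(k, \rank B)) *m row_base B); split.
  rewrite mxrankMfree ?row_base_free // rank_pid_mx //.
  exact: leq_trans dB (rank_leq_col B).
by rewrite (submx_trans (submxMl _ _)) // eq_row_base.
Qed.

End Orthogonality.

Lemma exists_perpmx_sup (F : finFieldType) p k (U : 'M[F]_(p, k)) r :
  (\rank U <= r)%N ->
  exists J : 'M[F]_k, \rank J = (k - r)%N /\ (U <= perpmx J)%MS.
Proof.
move=> Ur; have [J [rJ sJ]] : exists J : 'M[F]_k,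
    \rank J = (k - r)%N /\ (J <= kermx U^T)%MS.
  by apply: exists_submx_rank; rewrite mxrank_ker mxrank_tr leq_sub2l.
by exists J; rewrite /perpmx sub_kermx_trC.
Qed.

Lemma rank_perpmx (F : finFieldType) k (J : 'M[F]_k) :
  \rank (perpmx J) = (k - \rank J)%N.
Proof. by rewrite /perpmx mxrank_ker mxrank_tr. Qed.

Lemma subr_div_eq (K : fieldType) (a b c : K) :
  c != 0 -> ((a - b) / c == a / c) = (b == 0).
Proof.
by move=> c0; rewrite -subr_eq0 -mulrBl mulf_eq0 invr_eq0 (negPf c0) orbF
  addrAC subrr add0r oppr_eq0.
Qed.

Lemma span_filter_eq0 (F : finFieldType) n m (P : pred 'M[F]_(n, m)) :
  (<<[seq M <- enum 'M[F]_(n, m) | P M]>> == 0)%VS =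
  [forall M, P M ==> (M == 0)].
Proof.
apply/eqP/forallP => [span0 M | P0].
  apply/implyP => PM; rewrite -memv0 -span0 memv_span //.
  by rewrite mem_filter PM mem_enum.
apply/eqP; rewrite -subv0; apply/span_subvP => M.
by rewrite mem_filter => /andP[/(implyP (P0 M))/eqP-> _]; rewrite mem0v.
Qed.

Section RankMetricCode.
Variables (F : finFieldType) (n m : nat) (C : {vspace 'M[F]_(n, m)}).
Hypothesis C0 : C != 0%VS.

Lemma min_dist_leq M : M \in C -> M != 0 -> (min_dist C <= \rank M)%N.
Proof. by move=> MC M0; apply: geq_bigmin_cond; rewrite MC M0. Qed.

Lemma min_distP r :
  reflect (forall M, M \in C -> M != 0 -> (r < \rank M)%N) (r < min_dist C)%N.
Proof.
apply: (iffP idP) => [r_lt M MC M0 | r_lt].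
  exact: leq_trans r_lt (min_dist_leq MC M0).
have vC0 : vpick C != 0 by rewrite vpick0.
apply: leq_bigmin => [|M /andP[MC M0]]; last exact: r_lt.
exact: leq_trans (r_lt _ (memv_pick C) vC0) (rank_leq_row _).
Qed.

Lemma min_dist_gt0 : (0 < min_dist C)%N.
Proof. by apply/min_distP => M _; rewrite lt0n mxrank_eq0. Qed.

Lemma min_dist_leq_row : (min_dist C <= n)%N.
Proof.
by rewrite (leq_trans (min_dist_leq (memv_pick C) _)) ?vpick0 ?rank_leq_row.
Qed.

Lemma min_dist_leq_col : (min_dist C <= m)%N.
Proof.
by rewrite (leq_trans (min_dist_leq (memv_pick C) _)) ?vpick0 ?rank_leq_col.
Qed.

Lemma perpmx_free_min_dist p k (g : 'M[F]_(n, m) -> 'M[F]_(p, k))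
    (rank_g : forall M, \rank (g M) = \rank M) d :
  (d <= k)%N ->
  [forall J : 'M[F]_k, (\rank J == d) ==>
     [forall M, (M \in C) && (g M <= perpmx J)%MS ==> (M == 0)]]
  = (k - d < min_dist C)%N.
Proof.
move=> dk; apply/idP/idP => [/forallP allJ | /min_distP d_lt].
  apply/min_distP => M MC M0; rewrite ltnNge; apply/negP => rM.
  have [|J [rJ sJ]] := @exists_perpmx_sup _ _ _ (g M) (k - d).
    by rewrite rank_g.
  move: (allJ J); rewrite rJ subKn // eqxx => /forallP/(_ M).
  by rewrite MC sJ (negPf M0).
apply/forallP => J; apply/implyP => /eqP rJ; apply/forallP => M.
apply/implyP => /andP[MC sM]; apply: contraT => M0.
by have := mxrankS sM; rewrite rank_g rank_perpmx rJ leqNgt d_lt.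
Qed.

Lemma rho_c_maxE J : (0 < m)%N ->
  (rho_c C J == (\dim C)%:R / m%:R) =
  [forall M, (M \in C) && (M^T <= perpmx J)%MS ==> (M == 0)].
Proof.
move=> m_gt0; rewrite subr_div_eq ?pnatr_eq0 -?lt0n //.
by rewrite dimv_eq0 span_filter_eq0.
Qed.

Lemma rho_r_maxE K : (0 < n)%N ->
  (rho_r C K == (\dim C)%:R / n%:R) =
  [forall M, (M \in C) && (M <= perpmx K)%MS ==> (M == 0)].
Proof.
move=> n_gt0; rewrite subr_div_eq ?pnatr_eq0 -?lt0n //.
by rewrite dimv_eq0 span_filter_eq0.
Qed.

Lemma dmin_cE : (0 < m)%N -> dmin_c C = (n.+1 - min_dist C)%N.
Proof.
move=> m_gt0; have d_gt0 := min_dist_gt0; have d_le := min_dist_leq_row.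
apply: bigmin_ord_threshold => [|d]; first lia.
have d_le_n : (d <= n)%N by rewrite -ltnS.
transitivity (n - d < min_dist C)%N; last by apply/idP/idP; lia.
rewrite -(perpmx_free_min_dist (@mxrank_tr F n m)) //.
by apply: eq_forallb => J; rewrite rho_c_maxE.
Qed.

Lemma dmin_rE : (0 < n)%N -> dmin_r C = (m.+1 - min_dist C)%N.
Proof.
move=> n_gt0; have d_gt0 := min_dist_gt0; have d_le := min_dist_leq_col.
apply: bigmin_ord_threshold => [|d]; first lia.
have d_le_m : (d <= m)%N by rewrite -ltnS.
transitivity (m - d < min_dist C)%N; last by apply/idP/idP; lia.
rewrite -(perpmx_free_min_dist (g := id) (fun M => erefl)) //.
by apply: eq_forallb => K; rewrite rho_r_maxE.
Qed.

End RankMetricCode.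

Theorem corollary5p3 (F : finFieldType) (n m : nat) (C : {vspace 'M[F]_(n, m)}) :
  (2 <= n)%N -> (n <= m)%N -> C != 0%VS ->
  min_dist C = (n.+1 - dmin_c C)%N /\ min_dist C = (m.+1 - dmin_r C)%N.
Proof.
move=> n_ge2 n_le_m C0; have n_gt0 : (0 < n)%N by lia.
rewrite dmin_cE ?dmin_rE //; last exact: leq_trans n_le_m.
have := min_dist_gt0 C0; have := min_dist_leq_row C0.
have := min_dist_leq_col C0; lia.
Qed.
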